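(* Let $n\ge1$ and $0\le k\le n-1$. In $\mathbb Q[\lambda_1,\dots,\lambda_n]$, $$\sum_{i=1}^n \lambda_i^k\,\frac{\partial^k}{\partial\lambda_i^k}V(\lambda_1,\dots,\lambda_n) \;=\; k!\binom{n}{k+1}\,V(\lambda_1,\dots,\lambda_n),$$ where $V(\lambda_1,\dots,\lambda_n)=\prod_{1\le i<j\le n}(\lambda_j-\lambda_i)$.
   Context: $\lambda_1,\dots,\lambda_n$ are independent indeterminates. *)

From HB Require Import structures.
From mathcomp Require Import all_boot all_order all_algebra.
Unset Strict Implicit. Unset Printing Implicit Defensive.
Import Order.TTheory GRing.Theory Num.Theory.
Local Open Scope ring_scope.

(* mpoly n = Q[l_0, ..., l_{n-1}] (0-based indices); the outermost
   variable of mpoly n.+1 = {poly mpoly n} is l_n. *)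
Fixpoint mpoly (n : nat) : comNzRingType :=
  match n with
  | 0 => rat
  | n'.+1 => ({poly mpoly n'} : comNzRingType)
  end.

(* the variable l_i of mpoly n (meaningful for i < n) *)
Fixpoint mvar (n : nat) (i : nat) {struct n} : mpoly n :=
  match n return mpoly n with
  | 0 => 0
  | n'.+1 => if i == n' then ('X : {poly mpoly n'}) else (@mvar n' i)%:P
  end.

Fixpoint mderiv (n : nat) (i : nat) {struct n} : mpoly n -> mpoly n :=
  match n return mpoly n -> mpoly n with
  | 0 => fun _ => 0
  | n'.+1 => fun p : {poly mpoly n'} =>
      if i == n' then deriv p else map_poly (@mderiv n' i) p
  end.

Definition vandermonde (n : nat) : mpoly n :=
  \prod_(i < n) \prod_(j < n | (i < j)%N) (mvar n j - mvar n i).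

(** Expanding [V] by the Leibniz formula writes it as a signed sum of the
    monomials [prod_j l_j ^ s(j)] over permutations [s].  The operator
    [sum_i l_i^k d^k/dl_i^k] is diagonal on monomials: it multiplies
    [prod_j l_j ^ e_j] by [sum_i e_i^_k] (falling factorials).  For an exponent
    vector that is a permutation of [0, ..., n-1] this eigenvalue is
    [sum_(m < n) m^_k = k! C(n, k+1)], the same for every term. *)
From HB Require Import structures.
From mathcomp Require Import all_boot all_order all_algebra.
From mathcomp Require Import fingroup perm.
Import GRing.Theory.
Local Open Scope ring_scope.

Lemma iter_raddf_sum (V : zmodType) (f : {additive V -> V}) k
    (I : Type) (r : seq I) (P : pred I) (F : I -> V) :
  iter k f (\sum_(j <- r | P j) F j) = \sum_(j <- r | P j) iter k f (F j).
Proof. by elim: k => [//|k IH]; rewrite iterS IH raddf_sum. Qed.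

Section Derivation.

Context {R : comNzRingType} {D : R -> R}.
Hypothesis DD : {morph D : x y / x + y}.
Hypothesis DM : forall p q, D (p * q) = D p * q + p * D q.

Lemma derivation1 : D 1 = 0.
Proof.
have := DM 1 1; rewrite !mul1r mulr1 => D1.
by apply: (addrI (D 1)); rewrite addr0 -D1.
Qed.

Lemma derivation_natr m : D m%:R = 0.
Proof.
elim: m => [|m IH]; last by rewrite mulrS DD IH derivation1 addr0.
by apply: (addrI (D 0)); rewrite -DD !addr0.
Qed.

Lemma derivationMl c p : D c = 0 -> D (c * p) = c * D p.
Proof. by move=> Dc; rewrite DM Dc mul0r add0r. Qed.

Lemma derivation_prod_eq0 (I : Type) (r : seq I) (P : pred I) (F : I -> R) :
  (forall j, P j -> D (F j) = 0) -> D (\prod_(j <- r | P j) F j) = 0.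
Proof.
move=> DF; apply: (big_ind (fun p => D p = 0)) => //; first exact: derivation1.
by move=> a b Da Db; rewrite DM Da Db mul0r mulr0 addr0.
Qed.

Lemma derivationX_eq0 x m : D x = 0 -> D (x ^+ m) = 0.
Proof.
by move=> Dx; rewrite -(subn0 m) -prodr_const_nat derivation_prod_eq0.
Qed.

Lemma derivationX x m : D x = 1 -> D (x ^+ m) = m%:R * x ^+ m.-1.
Proof.
move=> Dx; elim: m => [|m IH]; first by rewrite expr0 derivation1 mul0r.
rewrite exprS DM Dx IH mul1r mulrCA -exprS.
case: m {IH} => [|m] /=; first by rewrite !mul0r expr0 addr0 !mulr1.
by rewrite [in RHS]mulrSr mulrDl mul1r addrC.
Qed.

Lemma iter_derivationMl k c p : D c = 0 -> iter k D (c * p) = c * iter k D p.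
Proof. by move=> Dc; elim: k => [//|k IH]; rewrite !iterS IH derivationMl. Qed.

Lemma iter_derivationXM k x e c : D x = 1 -> D c = 0 ->
  iter k D (x ^+ e * c) = (e ^_ k)%:R * (x ^+ (e - k) * c).
Proof.
move=> Dx Dc; elim: k => [|k IH]; first by rewrite subn0 mul1r.
rewrite iterS IH derivationMl ?derivation_natr //.
by rewrite DM Dc mulr0 addr0 derivationX // ffactnSr natrM -!mulrA subnS.
Qed.

End Derivation.

Lemma mderiv0 n i : mderiv n i 0 = 0.
Proof.
elim: n => [//|n IH] /=; case: ifP => _; first exact: deriv0.
exact: map_poly0.
Qed.

Lemma mderivB n i : {morph mderiv n i : x y / x - y}.
Proof.
elim: n => [x y|n IH x y] /=; first by rewrite subr0.
case: ifP => _; first exact: derivB.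
by apply/polyP => m; rewrite coefB !coef_map_id0 ?mderiv0 // coefB IH.
Qed.

HB.instance Definition _ n i :=
  GRing.isZmodMorphism.Build (mpoly n) (mpoly n) (mderiv n i) (mderivB n i).

Lemma mderivD n i : {morph mderiv n i : x y / x + y}.
Proof. exact: raddfD. Qed.

Lemma mderivM n i p q :
  mderiv n i (p * q) = mderiv n i p * q + p * mderiv n i q.
Proof.
elim: n p q => [p q|n IH p q] /=; first by rewrite mul0r mulr0 addr0.
case: ifP => _; first exact: derivM.
apply/polyP => m; rewrite coefD !coef_map_id0 ?mderiv0 // !coefM.
rewrite raddf_sum -big_split /=; apply: eq_bigr => j _.
by rewrite IH !coef_map_id0 ?mderiv0.
Qed.

Lemma mderiv1 n i : mderiv n i 1 = 0.
Proof. exact: derivation1 (mderivM n i). Qed.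

Lemma mderiv_mvar n i l : (i < n)%N -> (l < n)%N ->
  mderiv n i (mvar n l) = (i == l)%:R.
Proof.
elim: n => [//|n IH] /= ltin ltln.
have [eq_in|neq_in] := eqVneq i n.
  by subst i; case: eqVneq; rewrite ?derivX ?derivC.
have [eq_ln|neq_ln] := eqVneq l n.
  rewrite eq_ln (negbTE neq_in); apply/polyP => m.
  rewrite coef_map_id0 ?mderiv0 // coefX coef0.
  by case: (m == 1%N); rewrite ?mderiv1 ?mderiv0.
have ltin' : (i < n)%N by rewrite ltn_neqAle neq_in -ltnS.
have ltln' : (l < n)%N by rewrite ltn_neqAle neq_ln -ltnS.
apply/polyP => m; rewrite coef_map_id0 ?mderiv0 // coefC -polyC_natr coefC.
by case: (m == 0%N); rewrite ?mulr0n ?mderiv0 // IH.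
Qed.

Definition mmonomial {n} (e : 'I_n -> nat) : mpoly n :=
  \prod_(j < n) mvar n j ^+ e j.

Definition euler_op {n} k (p : mpoly n) : mpoly n :=
  \sum_(i < n) mvar n i ^+ k * iter k (mderiv n i) p.

Lemma euler_op_sum n k (I : Type) (r : seq I) (P : pred I) (F : I -> mpoly n) :
  euler_op k (\sum_(j <- r | P j) F j) = \sum_(j <- r | P j) euler_op k (F j).
Proof.
rewrite /euler_op exchange_big /=; apply: eq_bigr => i _.
by rewrite iter_raddf_sum mulr_sumr.
Qed.

Lemma euler_opMl n k c (p : mpoly n) : (forall i, mderiv n i c = 0) ->
  euler_op k (c * p) = c * euler_op k p.
Proof.
move=> Dc; rewrite /euler_op mulr_sumr; apply: eq_bigr => i _.
by rewrite (iter_derivationMl (mderivM n i)) // mulrCA.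
Qed.

Lemma mvarX_iter_mderiv_mmonomial n k (e : 'I_n -> nat) (i : 'I_n) :
  mvar n i ^+ k * iter k (mderiv n i) (mmonomial e)
  = (e i ^_ k)%:R * mmonomial e.
Proof.
rewrite /mmonomial (bigD1 i) //=.
rewrite (iter_derivationXM (mderivD n i) (mderivM n i)).
- rewrite mulrCA; have [le_ke|lt_ek] := leqP k (e i).
    by congr (_ * _); rewrite mulrA -exprD subnKC.
  by rewrite ffact_small // !mul0r.
- by rewrite mderiv_mvar // eqxx.
apply: (derivation_prod_eq0 (mderivM n i)) => j neq_ji.
apply: (derivationX_eq0 (mderivM n i)).
by rewrite mderiv_mvar // eq_sym (negbTE (neq_ji : (j : nat) != i)).
Qed.

Lemma euler_op_mmonomial n k (e : 'I_n -> nat) :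
  euler_op k (mmonomial e) = (\sum_(i < n) e i ^_ k)%:R * mmonomial e.
Proof.
rewrite /euler_op natr_sum mulr_suml; apply: eq_bigr => i _.
exact: mvarX_iter_mderiv_mmonomial.
Qed.

Lemma vandermonde_Leibniz n :
  vandermonde n = \sum_(s : 'S_n) (-1) ^+ s * mmonomial (fun j => (s j : nat)).
Proof.
have := det_Vandermonde (\row_(j < n) mvar n j).
under eq_bigr do under eq_bigr do rewrite !mxE.
rewrite /vandermonde => <-; rewrite -det_tr /determinant.
apply: eq_bigr => s _; congr (_ * _); apply: eq_bigr => j _.
by rewrite !mxE.
Qed.

Lemma sum_ffact_ord n k : (\sum_(i < n) i ^_ k = k`! * 'C(n, k.+1))%N.
Proof.
elim: n => [|n IH]; first by rewrite big_ord0 bin0n muln0.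
by rewrite big_ord_recr /= IH binS mulnDr -bin_ffact [X in (_ + X)%N]mulnC.
Qed.

Theorem mainTheorem16 (n k : nat) (hn : (1 <= n)%N) (hk : (k <= n - 1)%N) :
  \sum_(i < n) mvar n i ^+ k * iter k (mderiv n i) (vandermonde n)
  = (k`! * 'C(n, k.+1))%:R * vandermonde n.
Proof.
have Dsign (s : 'S_n) i : mderiv n i ((-1) ^+ s) = 0.
  apply: (derivationX_eq0 (mderivM n i)).
  by rewrite raddfN /= mderiv1 oppr0.
rewrite -/(euler_op k _) vandermonde_Leibniz euler_op_sum mulr_sumr.
apply: eq_bigr => s _.
rewrite euler_opMl // euler_op_mmonomial mulrCA -sum_ffact_ord.
by rewrite [X in (X%:R * _)](reindex_inj (@perm_inj _ s)).
Qed.
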